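(* Let $d\ge 1$ be an odd integer, $p\ge 0$ an integer, and $M\ge 1$ an integer with $2M+1\ge d+p+1$. Let $\gamma:[0,\pi]\to[0,\infty)$ be an integrable weighting function that is positive on a subset of $[0,\pi]$ of positive measure. For $\mathbf a=(a_{-M},\dots,a_M)\in\mathbb R^{2M+1}$ define the spectral error $$e(\eta)=\sum_{m=-M}^{M}a_m e^{jm\eta}-(j\eta)^d,\qquad \eta\in[0,\pi],\ j=\sqrt{-1}.$$ Let $\mathbf a^\ast$ be a minimizer of $$\int_0^\pi \gamma(\eta)\,|e(\eta)|^2\,d\eta$$ over all $\mathbf a\in\mathbb R^{2M+1}$ satisfying the order-of-accuracy constraints $$\sum_{m=-M}^{M} m^q a_m=\begin{cases}0,& q\neq d,\\ d!,& q=d,\end{cases}\qquad q=0,1,\dots,d+p .$$ Then the spectral error of $\mathbf a^\ast$ satisfies $\operatorname{Re}[e(\eta)]=0$ for all $\eta\in[0,\pi]$ (equivalently $\sum_m a^\ast_m\cos(m\eta)\equiv 0$).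
   Context: This concerns explicit finite difference approximations $f^{(d)}(x_i)\approx (\Delta x)^{-d}\sum_{m=-M}^{M}a_m f(x_i+m\Delta x)$ of the $d$-th derivative on a uniform grid with spacing $\Delta x$; $\eta=k\Delta x$ is the normalized wavenumber. The constraints express that the approximation has truncation error of order $p+1$. Here $0^0=1$. *)

From mathcomp Require Import all_boot all_algebra.
From mathcomp Require Export complex.
From mathcomp Require Import all_classical all_reals all_analysis.
Import GRing.Theory Num.Theory.
Set Implicit Arguments.
Unset Strict Implicit.
Unset Printing Implicit Defensive.
Local Open Scope ring_scope.

(* Stencil index: coefficient a i : 'I_(2M+1) is a_m with m = i - M. *)
Definition stencil_m {M : nat} (i : 'I_(2 * M + 1)) : int := (i%:Z - M%:Z)%R.

Definition cexpi (R : realType) (t : R) : R[i] := (Complex (cos t) (sin t)).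

Definition spectral_error (R : realType) (M d : nat)
    (a : 'I_(2 * M + 1) -> R) (eta : R) : R[i] :=
  (\sum_(i < 2 * M + 1)
      ((a i)%:C * cexpi ((stencil_m (M:=M) i)%:~R * eta)) - ('i * eta%:C) ^+ d)%C.

Definition cabs2 (R : realType) (z : R[i]) : R :=
  complex.Re z ^+ 2 + complex.Im z ^+ 2.

Definition spectral_cost (R : realType) (M d : nat) (gamma : R -> R)
    (a : 'I_(2 * M + 1) -> R) : \bar R :=
  (\int[@lebesgue_measure R]_(x in `[0%R, pi]%classic)
      (gamma x * cabs2 (spectral_error d a x))%:E)%E.

(* Order-of-accuracy constraints for q = 0..d+p (with 0^0 = 1). *)
Definition accuracy_constraints (R : realType) (M d p : nat)
    (a : 'I_(2 * M + 1) -> R) : Prop :=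
  forall q : nat, (q <= d + p)%N ->
    \sum_(i < 2 * M + 1) ((stencil_m (M:=M) i)%:~R ^+ q * a i) =
      (if q == d then (d`!)%:R else 0 : R).

From mathcomp Require Import all_boot all_algebra.
From mathcomp Require Import complex.
From mathcomp Require Import all_classical all_reals all_analysis.
From mathcomp Require Import ring lra zify finmap measurable_realfun.
Import mathcomp.order.order.Order.TTheory GRing.Theory Num.Theory.
Import numFieldTopology.Exports.
Local Open Scope ring_scope.

(* Writing a_m^o := (a_m - a_{-m})/2 for the odd part of a stencil, the moments
   sum_m m^q a^o_m vanish for even q and equal those of a for odd q, so a^o again
   satisfies the accuracy constraints because d is odd.  The spectral error of a^o
   has real part sum_m a^o_m cos(m eta) = 0 and the same imaginary part as that of a,
   hence cost(a) = int gamma (Re e)^2 + cost(a^o).  For a minimizer the first term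
   must vanish, so Re e = 0 on the set where gamma > 0, up to a null set: at
   infinitely many points of [0, pi].  Since Re e(eta) = sum_m a_m cos(m eta) is a
   polynomial (a combination of Chebyshev polynomials) in cos eta and cos is
   injective on [0, pi], this polynomial has infinitely many roots, so it is 0. *)

Fixpoint chebyshev (R : nzRingType) (n : nat) : {poly R} :=
  match n with
  | 0 => 1
  | 1 => 'X
  | (k.+1 as k1).+1 => 2%:P * 'X * chebyshev R k1 - chebyshev R k
  end.

Section cos_polynomials.
Variable R : realType.
Local Open Scope classical_set_scope.

Lemma chebyshev_cos n (x : R) : (chebyshev R n).[cos x] = cos (n%:R * x).
Proof.
suff : (chebyshev R n).[cos x] = cos (n%:R * x) /\
       (chebyshev R n.+1).[cos x] = cos (n.+1%:R * x) by case.
elim: n => [|n [IHn IHSn]]; first by rewrite /= hornerX hornerC mul0r cos0 mul1r.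
split=> //; rewrite /= hornerD hornerN !hornerM hornerC hornerX IHn IHSn.
have -> : n.+2%:R * x = n.+1%:R * x + x by rewrite -addn1 natrD mulrDl mul1r.
have -> : n%:R * x = n.+1%:R * x - x by rewrite -addn1 natrD mulrDl mul1r addrK.
by rewrite !cosD cosN sinN; lra.
Qed.

Lemma cos_intrM (m : int) (x : R) : cos (m%:~R * x) = (chebyshev R `|m|%N).[cos x].
Proof.
rewrite chebyshev_cos; case: m => n //=.
by rewrite NegzE mulrNz mulNr cosN.
Qed.

Lemma poly_eq0_of_cos_roots (Q : {poly R}) (S : set R) :
  infinite_set S -> S `<=` `[0, pi] -> (forall x, S x -> Q.[cos x] = 0) -> Q = 0.
Proof.
move=> Sinf S0pi QS; apply: contrapT => /eqP Q0.
have [B BS sizeB] := infinite_set_fset (size Q) Sinf.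
have : (size (map cos (enum_fset B)) < size Q)%N.
  apply: max_poly_roots => //.
    by apply/allP => _ /mapP[x xB ->]; apply/rootP/QS/BS.
  rewrite map_inj_in_uniq ?fset_uniq // => x y xB yB.
  by apply: cos_inj; apply: S0pi; apply: BS.
by rewrite size_map ltnNge sizeB.
Qed.

End cos_polynomials.

Section lebesgue_facts.
Variable R : realType.
Local Open Scope classical_set_scope.
Local Open Scope ereal_scope.
Local Notation mu := (@lebesgue_measure R).

Lemma lebesgue_infinite_setD_null {A N : set (measurableTypeR R)} :
  measurable A -> measurable N -> mu N = 0 -> 0 < mu A -> infinite_set (A `\` N).
Proof.
move=> mA mN N0 + ADN_fin.
have -> : mu A = mu (A `\` N) + mu (A `&` N) by exact: measureDI.
rewrite countable_lebesgue_measure0; last exact: finite_set_countable.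
by rewrite (subset_measure0 (measurableI _ _ mA mN) mN (@subIsetr _ _ _) N0) adde0 ltxx.
Qed.

Lemma weighted_sqr_integral_eq0_infinite_roots {D : set (measurableTypeR R)}
    {gamma h : R -> R} :
  measurable D -> measurable_fun D gamma -> measurable_fun D h ->
  (forall x, D x -> (0 <= gamma x)%R) ->
  0 < mu [set x | D x /\ (0 < gamma x)%R] ->
  \int[mu]_(x in D) (gamma x * h x ^+ 2)%:E = 0 ->
  infinite_set [set x | D x /\ h x = 0%R].
Proof.
move=> mD mgamma mh gamma_ge0 pos_gt0 int0.
have mF : measurable_fun D (fun x => (gamma x * h x ^+ 2)%:E).
  by apply/measurable_EFinP; apply: measurable_funM => //; exact: measurable_funX.
have [|N [mN N0 DN]] := (ae_eq_integral_abs mu mD mF).1.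
  rewrite -[RHS]int0; apply: eq_integral => x /set_mem Dx.
  by rewrite gee0_abs // lee_fin mulr_ge0 ?gamma_ge0 ?sqr_ge0.
have mpos : measurable [set x | D x /\ (0 < gamma x)%R].
  rewrite [X in measurable X](_ : _ = D `&` gamma @^-1` `]0%R, +oo[).
    exact: mgamma mD _ (measurable_itv _).
  by apply/seteqP; split => x /=; rewrite in_itv /= andbT.
apply: sub_infinite_set (lebesgue_infinite_setD_null mpos mN N0 pos_gt0).
move=> x [[Dx gamma_gt0] xN]; split => //.
have : (gamma x * h x ^+ 2)%:E = 0.
  by apply: contrapT => F_neq0; apply/xN/DN => /(_ Dx).
by move/eqP; rewrite eqe mulf_eq0 (gt_eqF gamma_gt0) sqrf_eq0 => /eqP.
Qed.

Lemma integrable_mul_continuous (a b : R) (gamma h : R -> R) :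
  mu.-integrable `[a, b] (EFin \o gamma) -> continuous h ->
  mu.-integrable `[a, b] (fun x => (gamma x * h x)%:E).
Proof.
move=> int_gamma h_cont.
have mh : measurable_fun (`[a, b] : set (measurableTypeR R)) h.
  exact: measurable_funS (subsetT _) (continuous_measurable_fun h_cont).
have bh : [bounded h x | x in `[a, b]].
  have [M [M_real hM]] := compact_bounded
    (continuous_compact (continuous_subspaceT h_cont) (@segment_compact _ a b)).
  by exists M; split => // N MN x abx; exact: hM N MN _ (imageP _ abx).
have mab : measurable (`[a, b] : set (measurableTypeR R)) by exact: measurable_itv.
have := integrableMl mab int_gamma mh bh.
by congr (_.-integrable _ _); apply/funext => x; rewrite /= EFinM.
Qed.

End lebesgue_facts.

Section odd_part.
Context {R : numFieldType} {M : nat}.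
Implicit Types (a : 'I_(2 * M + 1) -> R) (h : int -> R).

Lemma stencil_m_rev_ord (i : 'I_(2 * M + 1)) : stencil_m (rev_ord i) = - stencil_m i.
Proof. by rewrite /stencil_m /=; have := ltn_ord i; lia. Qed.

Definition odd_part a i := (a i - a (rev_ord i)) / 2.

Lemma sum_odd_part h a : \sum_i h (stencil_m i) * odd_part a i =
  \sum_i (h (stencil_m i) - h (- stencil_m i)) / 2 * a i.
Proof.
have sum_rev : \sum_i h (stencil_m i) * a (rev_ord i) = \sum_i h (- stencil_m i) * a i.
  rewrite (reindex_inj rev_ord_inj); apply: eq_bigr => i _.
  by rewrite rev_ordK stencil_m_rev_ord.
transitivity ((\sum_i h (stencil_m i) * a i - \sum_i h (stencil_m i) * a (rev_ord i)) / 2).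
  by rewrite -sumrB mulr_suml; apply: eq_bigr => i _; rewrite /odd_part; ring.
by rewrite sum_rev -sumrB mulr_suml; apply: eq_bigr => i _; ring.
Qed.

Lemma sum_odd_part_even h a : (forall m, h (- m) = h m) ->
  \sum_i h (stencil_m i) * odd_part a i = 0.
Proof.
move=> h_even; rewrite sum_odd_part big1 // => i _.
by rewrite h_even subrr mul0r mul0r.
Qed.

Lemma sum_odd_part_odd h a : (forall m, h (- m) = - h m) ->
  \sum_i h (stencil_m i) * odd_part a i = \sum_i h (stencil_m i) * a i.
Proof.
move=> h_odd; rewrite sum_odd_part; apply: eq_bigr => i _.
by rewrite h_odd opprK mulrDl -splitr.
Qed.

End odd_part.

Lemma accuracy_constraints_odd_part {R : realType} {M d p : nat}
    {a : 'I_(2 * M + 1) -> R} :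
  odd d -> accuracy_constraints d p a -> accuracy_constraints d p (odd_part a).
Proof.
move=> d_odd ha q le_qdp; pose h (m : int) : R := m%:~R ^+ q.
have [q_odd|q_even] := boolP (odd q).
  rewrite (sum_odd_part_odd h) ?ha // => m.
  by rewrite /h intrN exprNn -signr_odd q_odd mulN1r.
rewrite (sum_odd_part_even h) => [|m]; last first.
  by rewrite /h intrN exprNn -signr_odd (negbTE q_even) mul1r.
by case: eqP q_even => // ->; rewrite d_odd.
Qed.

Lemma continuous_sum {T : topologicalType} {K : numFieldType} {V : normedModType K}
    (I : Type) (r : seq I) (F : I -> T -> V) :
  (forall i, continuous (F i)) -> continuous (fun x => \sum_(i <- r) F i x).
Proof.
by move=> F_cont x; apply: cvg_big => [|i _]; [exact: add_continuous|exact: F_cont].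
Qed.

Section spectral_error_parts.
Context {R : realType} {M d : nat}.
Hypothesis d_odd : odd d.
Implicit Types (a b : 'I_(2 * M + 1) -> R) (x : R).
Local Open Scope complex_scope.

Lemma expr_imaginary_odd x : ('i * x%:C) ^+ d = ((-1) ^+ d./2 * x ^+ d)*i :> R[i].
Proof.
have i_pow : 'i ^+ d = (-1) ^+ d./2 * 'i :> R[i].
  by rewrite -[in LHS](odd_double_half d) d_odd add1n exprS -mul2n exprM sqr_i mulrC.
rewrite exprMn i_pow -rmorphXn -(rmorphN1 (real_complex R)) -rmorphXn mulrAC -rmorphM.
by simpc.
Qed.

Lemma Re_spectral_error b x :
  complex.Re (spectral_error d b x) = \sum_i cos ((stencil_m i)%:~R * x) * b i.
Proof.
rewrite /spectral_error expr_imaginary_odd raddfB /= raddf_sum subr0.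
by apply: eq_bigr => i _; rewrite /cexpi /=; ring.
Qed.

Lemma Im_spectral_error b x :
  complex.Im (spectral_error d b x) =
  \sum_i sin ((stencil_m i)%:~R * x) * b i - (-1) ^+ d./2 * x ^+ d.
Proof.
rewrite /spectral_error expr_imaginary_odd raddfB /= raddf_sum.
by congr (_ - _); apply: eq_bigr => i _; rewrite /cexpi /=; ring.
Qed.

Lemma Re_spectral_error_odd_part a x :
  complex.Re (spectral_error d (odd_part a) x) = 0.
Proof.
rewrite Re_spectral_error (sum_odd_part_even (fun m => cos (m%:~R * x))) // => m.
by rewrite intrN mulNr cosN.
Qed.

Lemma Im_spectral_error_odd_part a x :
  complex.Im (spectral_error d (odd_part a) x) = complex.Im (spectral_error d a x).
Proof.
rewrite !Im_spectral_error (sum_odd_part_odd (fun m => sin (m%:~R * x))) // => m.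
by rewrite intrN mulNr sinN.
Qed.

Lemma Re_spectral_error_poly_cos b :
  exists Q : {poly R}, forall x, complex.Re (spectral_error d b x) = Q.[cos x].
Proof.
exists (\sum_i b i *: chebyshev R `|stencil_m i|%N) => x.
rewrite Re_spectral_error horner_sum; apply: eq_bigr => i _.
by rewrite hornerZ cos_intrM mulrC.
Qed.

Lemma continuous_Re_spectral_error b :
  continuous (fun x => complex.Re (spectral_error d b x)).
Proof.
have [Q ReQ] := Re_spectral_error_poly_cos b.
rewrite (funext ReQ) => x.
by apply: continuous_comp; [exact: continuous_cos|exact: continuous_horner].
Qed.

Lemma continuous_Im_spectral_error b :
  continuous (fun x => complex.Im (spectral_error d b x)).
Proof.
rewrite (funext (Im_spectral_error b)) => x.
apply: (continuousB (f := fun x => \sum_i sin ((stencil_m i)%:~R * x) * b i)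
                    (g := fun x => (-1) ^+ d./2 * x ^+ d)).
  apply: continuous_sum => i {}x.
  apply: (@continuousM _ _ (fun x => sin _) (fun=> b i)); last exact: cst_continuous.
  by apply: continuous_comp; [exact: mulrl_continuous|exact: continuous_sin].
apply: (@continuousM _ _ (fun=> _) (fun x => x ^+ d)); first exact: cst_continuous.
exact: exprn_continuous.
Qed.

End spectral_error_parts.

Section optimal_stencils.
Context {R : realType} {M d p : nat} {gamma : R -> R}.
Local Open Scope classical_set_scope.
Local Open Scope ereal_scope.
Local Notation mu := (@lebesgue_measure R).
Local Notation D := (`[0%R, pi] : set (measurableTypeR R)).
Hypothesis d_odd : odd d.
Hypothesis gamma_int : mu.-integrable D (fun x => (gamma x)%:E).

Lemma integrable_weighted_sqr (h : R -> R) : continuous h ->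
  mu.-integrable D (fun x => (gamma x * h x ^+ 2)%:E).
Proof.
move=> h_cont; apply: integrable_mul_continuous => // x.
exact: continuous_comp (h_cont x) (@exprn_continuous _ 2 _).
Qed.

Lemma spectral_cost_split (b : 'I_(2 * M + 1) -> R) :
  spectral_cost d gamma b =
  \int[mu]_(x in D) (gamma x * complex.Re (spectral_error d b x) ^+ 2)%:E +
  \int[mu]_(x in D) (gamma x * complex.Im (spectral_error d b x) ^+ 2)%:E.
Proof.
rewrite -integralD //; last 2 first.
- by apply: integrable_weighted_sqr; exact: continuous_Re_spectral_error.
- by apply: integrable_weighted_sqr; exact: continuous_Im_spectral_error.
by apply: eq_integral => x _; rewrite -EFinD -mulrDr.
Qed.

Lemma spectral_cost_odd_part (a : 'I_(2 * M + 1) -> R) :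
  spectral_cost d gamma (odd_part a) =
  \int[mu]_(x in D) (gamma x * complex.Im (spectral_error d a x) ^+ 2)%:E.
Proof.
apply: eq_integral => x _.
by rewrite /cabs2 Re_spectral_error_odd_part // Im_spectral_error_odd_part // expr0n add0r.
Qed.

Lemma optimal_Re_spectral_error_integral_eq0 (a : 'I_(2 * M + 1) -> R) :
  (forall x, D x -> 0 <= gamma x)%R -> accuracy_constraints d p a ->
  (forall b : 'I_(2 * M + 1) -> R, accuracy_constraints d p b ->
     spectral_cost d gamma a <= spectral_cost d gamma b) ->
  \int[mu]_(x in D) (gamma x * complex.Re (spectral_error d a x) ^+ 2)%:E = 0.
Proof.
move=> gamma_ge0 a_feas a_min.
have Im_fin : \int[mu]_(x in D) (gamma x * complex.Im (spectral_error d a x) ^+ 2)%:E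
    \is a fin_num.
  apply: integrable_fin_num; first exact: measurable_itv.
  by apply: integrable_weighted_sqr; exact: continuous_Im_spectral_error.
have := a_min _ (accuracy_constraints_odd_part d_odd a_feas).
rewrite spectral_cost_split spectral_cost_odd_part -[X in _ <= X]add0e leeD2rE //.
move=> Re_le0; apply/le_anti; rewrite Re_le0 /=.
by apply: integral_ge0 => x Dx; rewrite lee_fin mulr_ge0 ?gamma_ge0 ?sqr_ge0.
Qed.

End optimal_stencils.

Theorem lemma2 (R : realType) (d p M : nat)
  (hd : odd d) (hM : (1 <= M)%N) (hMdp : (d + p + 1 <= 2 * M + 1)%N)
  (gamma : R -> R)
  (hgamma_nonneg : forall x : R, (0 <= x <= pi) -> 0 <= gamma x)
  (hgamma_int : (@lebesgue_measure R).-integrable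
                  (`[0%R, pi%R])%classic (fun x : R => (gamma x)%:E))
  (hgamma_pos : (0 < @lebesgue_measure R
                   ([set x : R | (0 <= x <= pi)%R /\ (0 < gamma x)%R])%classic)%E)
  (astar : 'I_(2 * M + 1) -> R)
  (hfeas : accuracy_constraints d p astar)
  (hmin : forall b : 'I_(2 * M + 1) -> R, accuracy_constraints d p b ->
            (spectral_cost d gamma astar <= spectral_cost d gamma b)%E) :
  forall eta : R, 0 <= eta <= pi ->
    complex.Re (spectral_error d astar eta) = 0.
Proof.
(* [hM] and [hMdp] only make the constraints satisfiable; the minimizer is given. *)
have [Q ReQ] := Re_spectral_error_poly_cos hd astar.
suff Q0 : Q = 0 by move=> eta _; rewrite ReQ Q0 horner0.
pose D := (`[0%R, pi] : set (measurableTypeR R))%classic.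
have gamma_ge0 x : D x -> 0 <= gamma x by rewrite /D /= in_itv => /hgamma_nonneg.
have mgamma : measurable_fun D gamma.
  by move/integrableP: hgamma_int => [/measurable_EFinP].
have mRe : measurable_fun D (fun x => complex.Re (spectral_error d astar x)).
  apply: measurable_funS (subsetT _) (continuous_measurable_fun _) => //.
  exact: continuous_Re_spectral_error.
have Re_int0 := optimal_Re_spectral_error_integral_eq0 hd hgamma_int _ gamma_ge0 hfeas hmin.
apply: (@poly_eq0_of_cos_roots _ _ [set x | D x /\ complex.Re (spectral_error d astar x) = 0]).
- apply: weighted_sqr_integral_eq0_infinite_roots mgamma mRe gamma_ge0 hgamma_pos Re_int0.
  exact: measurable_itv.
- by move=> x [].
- by move=> x [_]; rewrite ReQ.
Qed.
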